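(* Let $a,b$ be distinct letters. For every $D\in\{\mathrm{AH}_{\mathrm{ned}},\mathrm{AH}_{\mathrm{ged}},\mathrm{AH}_{\mathrm{ced}}\}$ and all natural numbers $j>i$, we have $D(a^*,(a^jb)^* )<D(a^*,(a^ib)^* )$.
   Context: Words are over a finite alphabet $\Sigma\ni a,b$. An edit path from $x$ to $y$ is a sequence $p=(a_1,b_1)\cdots(a_n,b_n)$ with $(a_i,b_i)\in(\Sigma\cup\{\varepsilon\})^2\setminus\{(\varepsilon,\varepsilon)\}$, $a_1\cdots a_n=x$, $b_1\cdots b_n=y$; $|p|=n$, $\mathrm{wgt}(p)=|\{i:a_i\ne b_i\}|$. $\mathrm{ed}(x,y)=\min_p\mathrm{wgt}(p)$; $\mathrm{ned}(x,y)=\min_p\mathrm{wgt}(p)/|p|$ ($\mathrm{ned}(\varepsilon,\varepsilon)=0$); $\mathrm{ged}(x,y)=\frac{2\mathrm{ed}(x,y)}{|x|+|y|+\mathrm{ed}(x,y)}$ ($0$ if $x=y=\varepsilon$); $\mathrm{ced}(x,y)$ is the minimum, over sequences $x=u_0,\dots,u_k=y$ with $\mathrm{ed}(u_{i-1},u_i)=1$, of $\sum_{i=1}^k1/\max(|u_{i-1}|,|u_i|)$. For a word distance $d$: $\overrightarrow{\mathrm{AH}}_{d}(X,Y)=\lim_{k\to\infty}\sup_{x\in X,|x|\ge k}\inf_{y\in Y}d(x,y)$ and $\mathrm{AH}_d(X,Y)=\max\{\overrightarrow{\mathrm{AH}}_{d}(X,Y),\overrightarrow{\mathrm{AH}}_{d}(Y,X)\}$.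 *)

From HB Require Import structures.
From mathcomp Require Import all_boot all_order all_algebra.
From mathcomp Require Import all_classical all_reals all_analysis.
Set Implicit Arguments. Unset Strict Implicit. Unset Printing Implicit Defensive.
Import Order.TTheory GRing.Theory Num.Theory.
Local Open Scope classical_set_scope.
Local Open Scope ring_scope.

Section EditDistances.
Variables (R : realType) (S : finType).

Definition word := seq S.
Definition edop := (option S * option S)%type.

Definition valid_op (o : edop) : bool := ~~ ((o.1 == None) && (o.2 == None)).

Definition is_edit_path (x y : word) (p : seq edop) : Prop :=
  [/\ all valid_op p, pmap id (unzip1 p) = x & pmap id (unzip2 p) = y].

Definition wgt (p : seq edop) : nat := count (fun o : edop => o.1 != o.2) p.

Definition trivial_path (x y : word) : seq edop :=
  map (fun c => (Some c, None)) x ++ map (fun c => (None, Some c)) y.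


Lemma ex_edit_wgt (x y : word) :
  exists n, `[< exists p, is_edit_path x y p /\ wgt p = n >].
Proof.
exists (wgt (trivial_path x y)); apply/asboolP; exists (trivial_path x y); split => //.
rewrite /is_edit_path /trivial_path; split.
- by rewrite all_cat; apply/andP; split; apply/allP => o /mapP [c _ ->].
- rewrite /unzip1 map_cat pmap_cat.
  have -> : pmap id [seq o.1 | o <- [seq ((Some c, None) : edop) | c <- x]] = x.
    by elim: x => //= c x ->.
  have -> : pmap id [seq o.1 | o <- [seq ((None, Some c) : edop) | c <- y]] = [::].
    by elim: y.
  by rewrite cats0.
- rewrite /unzip2 map_cat pmap_cat.
  have -> : pmap id [seq o.2 | o <- [seq ((Some c, None) : edop) | c <- x]] = [::].
    by elim: x.
  by elim: y => //= c y ->.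
Qed.

Definition ed (x y : word) : nat := ex_minn (ex_edit_wgt x y).

Definition ned (x y : word) : R :=
  if (x == [::]) && (y == [::]) then 0
  else inf [set ((wgt p)%:R / (size p)%:R : R) | p in is_edit_path x y].

Definition ged (x y : word) : R :=
  if (x == [::]) && (y == [::]) then 0
  else (2 * (ed x y)%:R) / ((size x)%:R + (size y)%:R + (ed x y)%:R).

(* cost of a chain x = u_0, u_1, ..., u_k (s = [u_1;...;u_k]) *)
Definition chain_cost (x : word) (s : seq word) : R :=
  \sum_(uv <- zip (x :: s) s) 1 / (maxn (size uv.1) (size uv.2))%:R.

Definition is_chain (x y : word) (s : seq word) : bool :=
  path (fun u v => ed u v == 1%N) x s && (last x s == y).

Definition ced (x y : word) : R :=
  inf [set chain_cost x s | s in [set s | is_chain x y s]].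

Local Open Scope ereal_scope.

Definition AH_dir (d : word -> word -> R) (X Y : set word) : \bar R :=
  limn (fun k : nat =>
    ereal_sup [set ereal_inf [set (d x y)%:E | y in Y]
              | x in [set x | X x /\ (k <= size x)%N]]).

Definition AH (d : word -> word -> R) (X Y : set word) : \bar R :=
  maxe (AH_dir d X Y) (AH_dir d Y X).

End EditDistances.

Definition kstar (S : finType) (w : seq S) : set (seq S) :=
  [set u | exists n : nat, u = flatten (nseq n w)].

(* A word of (a^i b)^* has a fraction 1/(i+1) of letters b, and every one of
   them must be edited on the way to a^*.  Counting the free (copying)
   operations of an edit path gives ned >= 1/(i+1) and ged >= 2/(2i+3); for
   ced, the density of non-a letters moves by at most 1/max(|u|,|v|) under a
   single edit, so every chain also costs at least 1/(i+1).
   Conversely, a^n with n = m(j+1) + r, r <= j, is close to (a^j b)^m: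
   substitute m letters and delete r.  Once m is large this costs at most
   (2j+1)/(2j(j+1)) < 1/j <= 1/(i+1) for ned and ced, and 1/(j+1) < 2/(2i+3)
   for ged; the substitutions from (a^j b)^m to a^(m(j+1)) are cheaper still. *)

From mathcomp Require Import all_boot all_order all_algebra.
From mathcomp Require Import all_classical all_reals all_analysis.
From mathcomp Require Import zify ring lra.
Set Implicit Arguments. Unset Strict Implicit. Unset Printing Implicit Defensive.
Import Order.TTheory GRing.Theory Num.Theory.

Local Open Scope classical_set_scope.
Local Open Scope ring_scope.

Section EditPaths.
Variable S : finType.
Implicit Types (x y u v w : word S) (p : seq (edop S)) (o : edop S).

Lemma is_edit_path_cons o x y p : valid_op o -> is_edit_path x y p ->
  is_edit_path (seq_of_opt o.1 ++ x) (seq_of_opt o.2 ++ y) (o :: p).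
Proof.
move=> vo [vp ex ey]; split; first by rewrite /= vo vp.
- by rewrite /= -ex; case: o.1.
- by rewrite /= -ey; case: o.2.
Qed.

Lemma is_edit_path_cat x1 y1 p1 x2 y2 p2 :
  is_edit_path x1 y1 p1 -> is_edit_path x2 y2 p2 ->
  is_edit_path (x1 ++ x2) (y1 ++ y2) (p1 ++ p2).
Proof.
move=> [v1 e1 f1] [v2 e2 f2]; split; first by rewrite all_cat v1 v2.
- by rewrite /unzip1 map_cat pmap_cat e1 e2.
- by rewrite /unzip2 map_cat pmap_cat f1 f2.
Qed.

Lemma wgt_cat p1 p2 : wgt (p1 ++ p2) = (wgt p1 + wgt p2)%N.
Proof. by rewrite /wgt count_cat. Qed.

Lemma wgt_eq0 p : wgt p = 0%N -> unzip1 p = unzip2 p.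
Proof.
rewrite /wgt => /eqP; rewrite -leqn0 leqNgt -has_count => /hasPn p_id.
by apply/eq_in_map => o /p_id /negPn /eqP.
Qed.

Lemma size_edit_path x y p : is_edit_path x y p ->
  (size x <= size p)%N /\ (size y <= size p)%N.
Proof.
by move=> [_ <- <-]; rewrite !size_pmap !(leq_trans (count_size _ _)) ?size_map.
Qed.

(* A free operation copies a letter of [x] into [y], hence a letter outside [P]. *)
Lemma size_edit_path_le (P : pred S) x y p : is_edit_path x y p ->
  all (predC P) y -> (size p <= wgt p + count (predC P) x)%N.
Proof.
move=> [vp <- <-]; elim: p vp => [|[[c|] [d|]] p IH] //= vp.
- move=> /andP[Pd /(IH vp)]; case: (eqVneq c d) => [->|cd].
    by rewrite eqxx Pd; lia.
  by rewrite (inj_eq (@Some_inj _)) cd; lia.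
- by move=> /(IH vp); lia.
- by move=> /andP[_ /(IH vp)]; lia.
Qed.

Lemma ed_spec x y : exists2 p, is_edit_path x y p & wgt p = ed x y.
Proof. by rewrite /ed; case: ex_minnP => m /asboolP [p [? ?]] _; exists p. Qed.

Lemma ed_min x y p : is_edit_path x y p -> (ed x y <= wgt p)%N.
Proof.
by move=> xyp; rewrite /ed; case: ex_minnP => m _; apply; apply/asboolP; exists p.
Qed.

Lemma ed_eq0 x y : ed x y = 0%N -> x = y.
Proof. by have [p [_ <- <-] <-] := ed_spec x y => /wgt_eq0 ->. Qed.

Definition hamming x y : nat := count (fun c => c.1 != c.2) (zip x y).

Lemma hamming_cons c d x y : hamming (c :: x) (d :: y) = ((c != d) + hamming x y)%N.
Proof. by []. Qed.

Lemma hammingxx x : hamming x x = 0%N.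
Proof. by elim: x => //= c x; rewrite hamming_cons eqxx. Qed.

Definition subst_path x y : seq (edop S) :=
  [seq (Some c.1, Some c.2) | c <- zip x y].

Lemma subst_pathP x y : size x = size y ->
  [/\ is_edit_path x y (subst_path x y), wgt (subst_path x y) = hamming x y
    & size (subst_path x y) = size x].
Proof.
elim: x y => [|c x IH] [|d y] //= [/IH [xy_path wgt_xy size_xy]].
split; last by rewrite size_xy.
- exact: (@is_edit_path_cons (Some c, Some d)).
- by rewrite /wgt /= (inj_eq (@Some_inj _)) -/(wgt _) wgt_xy.
Qed.

Definition del_path x : seq (edop S) := [seq (Some c, None) | c <- x].

Lemma del_pathP x :
  [/\ is_edit_path x [::] (del_path x), wgt (del_path x) = size x
    & size (del_path x) = size x].
Proof.
elim: x => [|c x [x_path wgt_x size_x]] //=; split; last by rewrite size_x.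
- exact: (@is_edit_path_cons (Some c, None)).
- by rewrite /wgt /= -/(wgt _) wgt_x.
Qed.

Lemma edit_path_hamming_del x1 x2 y : size x1 = size y ->
  exists2 p, is_edit_path (x1 ++ x2) y p &
    wgt p = (hamming x1 y + size x2)%N /\ size p = (size x1 + size x2)%N.
Proof.
move=> /subst_pathP [sp wsp ssp]; have [dp wdp sdp] := del_pathP x2.
exists (subst_path x1 y ++ del_path x2).
  by rewrite -[X in is_edit_path _ X]cats0; apply: is_edit_path_cat.
by rewrite wgt_cat size_cat wsp wdp ssp sdp.
Qed.

Lemma ed_edit1 w1 w2 o : o.1 != o.2 ->
  ed (w1 ++ seq_of_opt o.1 ++ w2) (w1 ++ seq_of_opt o.2 ++ w2) = 1%N.
Proof.
move=> o12; have vo : valid_op o by case: o o12 => [[?|] [?|]].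
have [p1_path p1_wgt _] := subst_pathP (erefl (size w1)).
have [p2_path p2_wgt _] := subst_pathP (erefl (size w2)).
have le1 : (ed (w1 ++ seq_of_opt o.1 ++ w2) (w1 ++ seq_of_opt o.2 ++ w2) <= 1)%N.
  apply: leq_trans (ed_min (is_edit_path_cat p1_path (is_edit_path_cons vo p2_path))) _.
  by rewrite wgt_cat -cat1s wgt_cat p1_wgt p2_wgt !hammingxx /wgt /= o12.
suff : ed (w1 ++ seq_of_opt o.1 ++ w2) (w1 ++ seq_of_opt o.2 ++ w2) != 0%N by lia.
apply: contra_neq o12 => /ed_eq0 /eqP; rewrite eqseq_cat // eqxx /= => /eqP z12.
have size12 : size (seq_of_opt o.1) = size (seq_of_opt o.2).
  by move/(congr1 size): z12; rewrite !size_cat => /addIn.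
by move/eqP: z12; rewrite eqseq_cat // => /andP[/eqP /(can_inj seq_of_optK)].
Qed.

Lemma ed_eq1_inv u v : ed u v = 1%N -> exists w1 w2 o,
  [/\ o.1 != o.2, u = w1 ++ seq_of_opt o.1 ++ w2 & v = w1 ++ seq_of_opt o.2 ++ w2].
Proof.
have [p [vp <- <-] <-] := ed_spec u v.
elim: p vp => [|e p IH] //= /andP[_ vp]; rewrite /wgt /=.
case: (eqVneq e.1 e.2) => [e12|e12] /=.
- move=> /IH [//|w1 [w2 [e' [e12' -> ->]]]].
  by exists (seq_of_opt e.1 ++ w1), w2, e'; rewrite -!catA -e12; case: e.1.
- move=> [/wgt_eq0 p_id]; exists [::], (pmap id (unzip1 p)), e.
  by rewrite p_id; split=> //; [case: e.1 | case: e.2].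
Qed.

Lemma ed_catl w u v : ed u v = 1%N -> ed (w ++ u) (w ++ v) = 1%N.
Proof.
by move=> /ed_eq1_inv [w1 [w2 [e [e12 -> ->]]]]; rewrite !(catA w w1) ed_edit1.
Qed.

End EditPaths.

Section Chains.
Variable S : finType.
Implicit Types (x y u v w : word S) (s t : seq (word S)).

Local Notation ed1 := (fun u v : word S => ed u v == 1%N).

Lemma is_chain_cat x y z s t :
  is_chain x y s -> is_chain y z t -> is_chain x z (s ++ t).
Proof.
move=> /andP[xs /eqP ys] /andP[yt yz].
by rewrite /is_chain cat_path last_cat xs ys yt.
Qed.

Lemma path_ed1_catl w x s : path ed1 x s -> path ed1 (w ++ x) (map (cat w) s).
Proof.
elim: s x => //= v s IH x /andP[/eqP xv vs].
by rewrite ed_catl // IH.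
Qed.

Lemma is_chain_catl w x y s :
  is_chain x y s -> is_chain (w ++ x) (w ++ y) (map (cat w) s).
Proof.
move=> /andP[xs /eqP xy].
by rewrite /is_chain path_ed1_catl // (last_map (cat w)) xy eqxx.
Qed.

Fixpoint del_chain x : seq (word S) :=
  if x is _ :: x' then x' :: del_chain x' else [::].

Lemma del_chainP x : is_chain x [::] (del_chain x).
Proof.
elim: x => //= c x /andP[xs xl].
by rewrite /is_chain /= xs xl andbT -[c :: x]cat0s (@ed_edit1 _ [::] x (Some c, None)).
Qed.

Lemma size_del_chain x : size (del_chain x) = size x.
Proof. by elim: x => //= c x ->. Qed.

Fixpoint ins_chain y : seq (word S) :=
  if y is _ :: y' then rcons (ins_chain y') y else [::].

Lemma ins_chainP y : is_chain [::] y (ins_chain y).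
Proof.
elim: y => //= c y /andP[ys /eqP yl].
rewrite /is_chain rcons_path ys last_rcons eqxx yl !andbT.
by rewrite -[y]cat0s -[c :: y]cat0s (@ed_edit1 _ [::] y (None, Some c)).
Qed.

Lemma is_chain_ex x y : exists s, is_chain x y s.
Proof.
by exists (del_chain x ++ ins_chain y); apply: is_chain_cat (del_chainP x) (ins_chainP y).
Qed.

Fixpoint subst_chain x y : seq (word S) :=
  match x, y with
  | c :: x', d :: y' =>
    let t := map (cons d) (subst_chain x' y') in
    if c == d then t else (d :: x') :: t
  | _, _ => [::]
  end.

Lemma subst_chainP x y : size x = size y ->
  [/\ is_chain x y (subst_chain x y), size (subst_chain x y) = hamming x y
    & all (fun u => size u == size x) (subst_chain x y)].
Proof.
elim: x y => [|c x IH] [|d y] //= [/IH [xy_chain xy_size xy_all]].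
rewrite hamming_cons; have dxy := is_chain_catl [:: d] xy_chain.
case: (eqVneq c d) dxy => [<-|cd] dxy /=.
  by rewrite size_map all_map; split.
rewrite size_map xy_size all_map eqxx /=; split=> //.
rewrite /is_chain /= -[c :: x]cat0s -[d :: x]cat0s.
by rewrite (@ed_edit1 _ [::] x (Some c, Some d)) /= ?(inj_eq (@Some_inj _)).
Qed.

End Chains.

Section FracArith.
Variable F : realFieldType.

Lemma dist_frac_succ (k n f : F) : 0 <= k <= n -> 0 <= f <= 1 ->
  `|(k + f) / (n + 1) - k / n| <= 1 / (n + 1).
Proof.
move=> /andP[k0 kn] /andP[f0 f1].
have [n0 | nn0] := eqVneq n 0.
  by rewrite n0 (_ : k = 0) ?invr0 ?mulr0 ?subr0 ?add0r ?invr1 ?mulr1 ?ger0_norm; lra.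
have n_gt0 : 0 < n by rewrite lt0r nn0 (le_trans k0 kn).
rewrite (_ : _ - _ = (n * f - k) / (n * (n + 1))); last by field; lra.
have nn1_gt0 : 0 < n * (n + 1) by nra.
rewrite normrM [`|_^-1|]ger0_norm; last by rewrite invr_ge0 ltW.
rewrite ler_pdivrMr //.
rewrite (_ : 1 / (n + 1) * (n * (n + 1)) = n); last by field; lra.
by rewrite ler_norml; apply/andP; split; nra.
Qed.

Lemma ler_natr_div (m n p q : nat) : (0 < n)%N -> (0 < q)%N -> (m * q <= p * n)%N ->
  m%:R / n%:R <= p%:R / q%:R :> F.
Proof.
move=> n0 q0 mqpn; rewrite ler_pdivrMr ?ltr0n // mulrAC ler_pdivlMr ?ltr0n //.
by rewrite -!natrM ler_nat.
Qed.

Lemma ltr_natr_div (m n p q : nat) : (0 < n)%N -> (0 < q)%N -> (m * q < p * n)%N ->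
  m%:R / n%:R < p%:R / q%:R :> F.
Proof.
move=> n0 q0 mqpn; rewrite ltr_pdivrMr ?ltr0n // mulrAC ltr_pdivlMr ?ltr0n //.
by rewrite -!natrM ltr_nat.
Qed.

End FracArith.

Section Costs.
Variables (R : realType) (S : finType).
Implicit Types (x u v w : word S) (s : seq (word S)).

Lemma chain_cost_cons x v s :
  chain_cost R x (v :: s) = 1 / (maxn (size x) (size v))%:R + chain_cost R v s.
Proof. by rewrite /chain_cost /= big_cons. Qed.

Lemma chain_cost_ge0 x s : 0 <= chain_cost R x s.
Proof. by rewrite /chain_cost; apply: sumr_ge0 => uv _; rewrite divr_ge0. Qed.

Lemma chain_cost_le (L : nat) x s : (0 < L)%N -> all (fun u => L <= size u)%N s ->
  chain_cost R x s <= (size s)%:R / L%:R.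
Proof.
move=> L0; elim: s x => [|v s IH] x /=; first by rewrite /chain_cost big_nil mul0r.
move=> /andP[Lv Ls]; rewrite chain_cost_cons -natr1 mulrDl addrC.
apply: lerD; first exact: IH.
have Lmax : (L <= maxn (size x) (size v))%N by rewrite leq_max Lv orbT.
by rewrite !mul1r lef_pV2 ?posrE ?ltr0n ?ler_nat // (leq_trans L0).
Qed.

Definition density (P : pred S) u : R := (count P u)%:R / (size u)%:R.

Variable P : pred S.

Lemma density_perm u v : perm_eq u v -> density P u = density P v.
Proof. by move=> uv; rewrite /density (permP uv P) (perm_size uv). Qed.

Lemma density_cons_dist c u :
  `|density P (c :: u) - density P u| <= 1 / (size u).+1%:R.
Proof.
rewrite /density /= natrD -natr1 (addrC (P c)%:R); apply: dist_frac_succ.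
  by rewrite ler0n ler_nat count_size.
by rewrite ler0n lern1 leq_b1.
Qed.

Lemma density_subst_dist c d u :
  `|density P (c :: u) - density P (d :: u)| <= 1 / (size u).+1%:R.
Proof.
rewrite /density /= -mulrBl normrM [`|_^-1|]ger0_norm ?invr_ge0 // mul1r.
rewrite ler_piMl ?invr_ge0 // !natrD opprD addrACA subrr addr0.
by case: (P c); case: (P d); rewrite /= ?subrr ?normr0 ?subr0 ?sub0r ?normrN ?normr1.
Qed.

Lemma density_ed1 u v : ed u v = 1%N ->
  `|density P u - density P v| <= 1 / (maxn (size u) (size v))%:R.
Proof.
have mid w1 w2 c : perm_eq (w1 ++ [:: c] ++ w2) (c :: (w1 ++ w2)).
  by rewrite perm_catCA.
move=> /ed_eq1_inv [w1 [w2 [[[c|] [d|]] [//= _ -> ->]]]];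
  rewrite ?(density_perm (mid w1 w2 _)) ?(perm_size (mid w1 w2 _)) /=.
- by rewrite maxnn density_subst_dist.
- by rewrite (maxn_idPl (leqnSn _)) density_cons_dist.
- by rewrite distrC (maxn_idPr (leqnSn _)) density_cons_dist.
Qed.

Lemma density_sub_le_chain_cost x s :
  path (fun u v => ed u v == 1%N) x s ->
  density P x - density P (last x s) <= chain_cost R x s.
Proof.
elim: s x => [|v s IH] x /=; first by rewrite subrr chain_cost_ge0.
move=> /andP[/eqP xv vs]; rewrite chain_cost_cons.
have := ler_norm (density P x - density P v); have := density_ed1 xv; have := IH v vs.
lra.
Qed.

End Costs.

Section Distances.
Variables (R : realType) (S : finType).
Implicit Types (x y : word S) (p : seq (edop S)) (s : seq (word S)).

Lemma ned_le_path x y p : is_edit_path x y p -> ned R x y <= (wgt p)%:R / (size p)%:R.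
Proof.
move=> xyp; rewrite /ned; case: ifP => _; first by rewrite divr_ge0.
apply: ge_inf; last by exists p.
by exists 0 => _ [q _ <-]; rewrite divr_ge0.
Qed.

Lemma ned_ge x y c : ~~ ((x == [::]) && (y == [::])) ->
  (forall p, is_edit_path x y p -> c <= (wgt p)%:R / (size p)%:R) -> c <= ned R x y.
Proof.
move=> /negbTE xy_nil c_le; rewrite /ned xy_nil; apply: lb_le_inf; last first.
  by move=> _ [p xyp <-]; apply: c_le.
by have [p xyp _] := ed_spec x y; exists ((wgt p)%:R / (size p)%:R); exists p.
Qed.

Lemma gedE x y : ged R x y = if (x == [::]) && (y == [::]) then 0 else
  (2 * ed x y)%:R / (size x + size y + ed x y)%:R.
Proof. by rewrite /ged natrM !natrD. Qed.

Lemma ced_le_chain x y s : is_chain x y s -> ced R x y <= chain_cost R x s.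
Proof.
move=> xys; apply: ge_inf; last by exists s.
by exists 0 => _ [t _ <-]; apply: chain_cost_ge0.
Qed.

Lemma ced_ge x y c :
  (forall s, is_chain x y s -> c <= chain_cost R x s) -> c <= ced R x y.
Proof.
move=> c_le; apply: lb_le_inf; last by move=> _ [s xys <-]; apply: c_le.
by have [s xys] := is_chain_ex x y; exists (chain_cost R x s); exists s.
Qed.

Lemma density_le_ned (P : pred S) x y : x != [::] -> all (predC P) y ->
  density R P x <= ned R x y.
Proof.
move=> x_ne yP; apply: ned_ge => [|p xyp]; first by rewrite (negbTE x_ne).
have [sx_le _] := size_edit_path xyp; have sp_le := size_edit_path_le xyp yP.
have cnt := count_predC P x; rewrite -size_eq0 -lt0n in x_ne.
apply: ler_natr_div => //; first exact: leq_trans sx_le.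
have := leq_mul (leqnn (count (predC P) x)) sx_le.
have := leq_mul (leqnn (size x)) sp_le.
have := congr1 (muln^~ (size p)) cnt; nia.
Qed.

Lemma count_le_ged (P : pred S) x y : x != [::] -> all (predC P) y ->
  (2 * count P x)%:R / (2 * size x + count P x)%:R <= ged R x y.
Proof.
move=> x_ne yP; rewrite gedE (negbTE x_ne) /=.
have [p xyp wgt_p] := ed_spec x y.
have [sx_le sy_le] := size_edit_path xyp; have := size_edit_path_le xyp yP.
have cnt := count_predC P x; rewrite wgt_p -size_eq0 -lt0n in x_ne * => sp_le.
apply: ler_natr_div; [by rewrite addn_gt0 muln_gt0 x_ne | by rewrite !addn_gt0 x_ne |].
set e := ed x y in sp_le *; set cP := count P x in cnt *.
have [sy_sx | sx_sy] := leqP (size y) (size x).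
- have e_ge : (cP <= e)%N by lia.
  have := leq_mul e_ge (leqnn (size x)); have := leq_mul (leqnn cP) sy_sx; nia.
- have e_ge : (size y - size x + cP <= e)%N by lia.
  have cP_le : (cP <= size x)%N by rewrite /cP count_size.
  have := leq_mul e_ge (leqnn (size x)); have := leq_mul cP_le (leqnn (size y - size x)).
  nia.
Qed.

Lemma density_sub_le_ced (P : pred S) x y : density R P x - density R P y <= ced R x y.
Proof.
by apply: ced_ge => s /andP[xs /eqP <-]; apply: density_sub_le_chain_cost.
Qed.

Lemma ned_le_hamming x1 x2 y : size x1 = size y ->
  ned R (x1 ++ x2) y <= (hamming x1 y + size x2)%:R / (size x1 + size x2)%:R.
Proof.
by move=> /(edit_path_hamming_del x2) [p xyp [<- <-]]; apply: ned_le_path.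
Qed.

Lemma ed_le_hamming x1 x2 y : size x1 = size y ->
  (ed (x1 ++ x2) y <= hamming x1 y + size x2)%N.
Proof. by move=> /(edit_path_hamming_del x2) [p xyp [<- _]]; apply: ed_min. Qed.

Lemma ged_le x y e : (ed x y <= e)%N ->
  ged R x y <= (2 * e)%:R / (size x + size y + e)%:R.
Proof.
move=> ed_le; rewrite gedE; case: ifP => [_|]; first by rewrite divr_ge0.
move=> xy_nil; have xy_pos : (0 < size x + size y)%N.
  by rewrite addn_gt0 !lt0n !size_eq0 -negb_and xy_nil.
have := leq_mul ed_le (leqnn (size x + size y)) => ed_s.
by apply: ler_natr_div; [lia | lia | nia].
Qed.

Lemma ced_le_hamming x1 x2 y : size x1 = size y -> (0 < size y)%N ->
  ced R (x1 ++ x2) y <= (hamming x1 y + size x2)%:R / (size y)%:R.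
Proof.
move=> x1y y_pos; have [x1y_chain x1y_size x1y_all] := subst_chainP x1y.
have del := is_chain_catl x1 (del_chainP x2); rewrite cats0 in del.
apply: le_trans (ced_le_chain (is_chain_cat del x1y_chain)) _.
apply: le_trans (chain_cost_le R _ y_pos _) _.
- rewrite all_cat all_map; apply/andP; split; apply/allP => u.
  + by move=> _ /=; rewrite size_cat -x1y leq_addr.
  + by move=> /(allP x1y_all) /eqP ->; rewrite x1y.
- by rewrite size_cat size_map size_del_chain x1y_size addnC.
Qed.

End Distances.

Section AsymptoticHausdorff.
Variables (R : realType) (S : finType).
Implicit Types (d : word S -> word S -> R) (X Y : set (word S)).
Local Open Scope ereal_scope.

Lemma AH_dir_ereal_inf d X Y : AH_dir d X Y =
  ereal_inf (range (fun k => ereal_sup [set ereal_inf [set (d x y)%:E | y in Y]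
                                       | x in [set x | X x /\ (k <= size x)%N]])).
Proof.
rewrite /AH_dir; apply: cvg_lim => //; apply: ereal_nonincreasing_cvgn => n m nm.
apply: ereal_sup_le => _ [x [Xx sx] <-]; exists x => //; split => //.
exact: leq_trans sx.
Qed.

Lemma AH_dir_ge d X Y (c : R) :
  (forall k, exists x, [/\ X x, (k <= size x)%N & forall y, Y y -> (c <= d x y)%R]) ->
  c%:E <= AH_dir d X Y.
Proof.
move=> far_x; rewrite AH_dir_ereal_inf; apply: le_ereal_inf_tmp => _ [k _ <-].
have [x [Xx kx c_le]] := far_x k; apply: le_trans (ereal_sup_ubound _); last by exists x.
by apply: le_ereal_inf_tmp => _ [y Yy <-]; rewrite lee_fin c_le.
Qed.

Lemma AH_dir_le d X Y (c : R) (K : nat) :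
  (forall x, X x -> (K <= size x)%N -> exists2 y, Y y & (d x y <= c)%R) ->
  AH_dir d X Y <= c%:E.
Proof.
move=> near_y; rewrite AH_dir_ereal_inf.
apply: le_trans (ereal_inf_lbound _) _; first by exists K.
apply: ge_ereal_sup => _ [x [Xx Kx] <-]; have [y Yy le_c] := near_y x Xx Kx.
by apply: le_trans (ereal_inf_lbound _) _; first exists y.
Qed.

End AsymptoticHausdorff.

Section WordPowers.
Variable S : finType.
Implicit Types (w : word S) (P : pred S).

Definition wpow w m : word S := flatten (nseq m w).

Lemma count_wpow P w m : count P (wpow w m) = (m * count P w)%N.
Proof. by elim: m => //= m IH; rewrite count_cat -/(wpow w m) IH mulSn. Qed.

Lemma size_wpow w m : size (wpow w m) = (m * size w)%N.
Proof. by rewrite -!(count_predT) count_wpow. Qed.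

Lemma kstar1P (c : S) x : kstar [:: c] x <-> exists n, x = nseq n c.
Proof.
have flat1 n : flatten (nseq n [:: c]) = nseq n c by elim: n => //= n ->.
by split => -[n ->]; exists n; rewrite flat1.
Qed.

Lemma all_predC_predC1_nseq (c : S) n : all (predC (predC1 c)) (nseq n c).
Proof. by rewrite all_nseq /= eqxx orbT. Qed.

Lemma hamming_nseql (c : S) y : hamming (nseq (size y) c) y = count (predC1 c) y.
Proof. by elim: y => //= d y IH; rewrite hamming_cons IH eq_sym. Qed.

Lemma hamming_nseqr (c : S) x : hamming x (nseq (size x) c) = count (predC1 c) x.
Proof. by elim: x => //= d x IH; rewrite hamming_cons IH. Qed.

End WordPowers.

Section Blocks.
Variables (R : realType) (S : finType) (a b : S).
Hypothesis ab : a != b.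
Implicit Types (d : word S -> word S -> R).

Local Notation block i := (rcons (nseq i a) b).

Lemma count_block_pow i m : count (predC1 a) (wpow (block i) m) = m.
Proof.
by rewrite count_wpow -cats1 count_cat count_nseq /= eqxx eq_sym ab muln1.
Qed.

Lemma size_block_pow i m : size (wpow (block i) m) = (m * i.+1)%N.
Proof. by rewrite size_wpow size_rcons size_nseq. Qed.

Lemma AH_block_ge d i (c : R) :
  (forall m n, (0 < m)%N -> c <= d (wpow (block i) m) (nseq n a)) ->
  (c%:E <= AH d (kstar [:: a]) (kstar (block i)))%E.
Proof.
move=> c_le; rewrite le_max; apply/orP; right.
apply: AH_dir_ge => k; exists (wpow (block i) k.+1); split.
- by exists k.+1.
- by rewrite size_block_pow; nia.
- by move=> y /kstar1P [n ->]; apply: c_le.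
Qed.

Lemma AH_block_le d j (v : R) (M : nat) :
  (forall m, (0 < m)%N -> d (wpow (block j) m) (nseq (m * j.+1) a) <= v) ->
  (forall m r, (M <= m)%N -> (r <= j)%N ->
     d (nseq (m * j.+1) a ++ nseq r a) (wpow (block j) m) <= v) ->
  (AH d (kstar [:: a]) (kstar (block j)) <= v%:E)%E.
Proof.
move=> pow_le nseq_le; rewrite ge_max; apply/andP; split.
- apply: (AH_dir_le (K := M * j.+1)) => _ /kstar1P [n ->].
  rewrite size_nseq => Mn; exists (wpow (block j) (n %/ j.+1)%N).
    by exists (n %/ j.+1)%N.
  rewrite {1}(div.divn_eq n j.+1) nseqD; apply: nseq_le; first by rewrite leq_divRL.
  by rewrite -ltnS ltn_pmod.
- apply: (AH_dir_le (K := 1)) => _ [m ->]; rewrite size_block_pow muln_gt0 andbT.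
  move=> m_pos; exists (nseq (m * j.+1) a); last exact: pow_le.
  by apply/kstar1P; exists (m * j.+1)%N.
Qed.

Lemma density_block_pow i m : (0 < m)%N ->
  density R (predC1 a) (wpow (block i) m) = 1 / (i.+1)%:R.
Proof.
move=> m_pos; rewrite /density count_block_pow size_block_pow natrM.
by field; rewrite nat1r !pnatr_eq0 -!lt0n m_pos.
Qed.

Lemma AH_ned_block_ge i :
  ((1 / (i.+1)%:R)%:E <= AH (@ned R S) (kstar [:: a]) (kstar (block i)))%E.
Proof.
apply: AH_block_ge => m n m_pos; rewrite -(density_block_pow i m_pos).
apply: density_le_ned (all_predC_predC1_nseq a n).
by rewrite -size_eq0 size_block_pow -lt0n muln_gt0 m_pos.
Qed.

Lemma AH_ged_block_ge i :
  ((2%:R / (2 * i + 3)%:R)%:E <= AH (@ged R S) (kstar [:: a]) (kstar (block i)))%E.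
Proof.
apply: AH_block_ge => m n m_pos.
apply: le_trans (count_le_ged _ _ (all_predC_predC1_nseq a n)); last first.
  by rewrite -size_eq0 size_block_pow -lt0n muln_gt0 m_pos.
rewrite count_block_pow size_block_pow; apply: ler_natr_div; nia.
Qed.

Lemma AH_ced_block_ge i :
  ((1 / (i.+1)%:R)%:E <= AH (@ced R S) (kstar [:: a]) (kstar (block i)))%E.
Proof.
apply: AH_block_ge => m n m_pos; apply: le_trans (density_sub_le_ced R (predC1 a) _ _).
by rewrite density_block_pow // /density count_nseq /= eqxx mul0r subr0.
Qed.

Lemma AH_ned_block_le j : (0 < j)%N ->
  (AH (@ned R S) (kstar [:: a]) (kstar (block j))
     <= ((2 * j + 1)%:R / (2 * j * j.+1)%:R)%:E)%E.
Proof.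
move=> j_pos; apply: (AH_block_le (M := 2 * j * j.+1)) => [m m_pos | m r Mm rj].
- rewrite -[wpow _ _]cats0; apply: le_trans (ned_le_hamming _ _ _) _.
    by rewrite size_nseq size_block_pow.
  rewrite -size_block_pow hamming_nseqr count_block_pow size_block_pow addn0.
  apply: ler_natr_div; nia.
- apply: le_trans (ned_le_hamming _ _ _) _; first by rewrite size_nseq size_block_pow.
  rewrite -size_block_pow hamming_nseql count_block_pow !size_nseq size_block_pow.
  apply: ler_natr_div; nia.
Qed.

Lemma AH_ged_block_le j : (0 < j)%N ->
  (AH (@ged R S) (kstar [:: a]) (kstar (block j)) <= (1 / (j.+1)%:R)%:E)%E.
Proof.
move=> j_pos; apply: (AH_block_le (M := 2 * j * j.+1)) => [m m_pos | m r Mm rj].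
- have := ed_le_hamming [::] (esym (size_nseq (size (wpow (block j) m)) a)).
  rewrite cats0 hamming_nseqr count_block_pow addn0 size_block_pow => ed_le.
  apply: le_trans (ged_le _ ed_le) _.
  rewrite size_block_pow size_nseq; apply: (@ler_natr_div _ _ _ 1); nia.
- have := ed_le_hamming (nseq r a) (size_nseq (size (wpow (block j) m)) a).
  rewrite hamming_nseql count_block_pow size_nseq size_block_pow => ed_le.
  apply: le_trans (ged_le _ ed_le) _.
  rewrite size_cat !size_nseq size_block_pow; apply: (@ler_natr_div _ _ _ 1); nia.
Qed.

Lemma AH_ced_block_le j : (0 < j)%N ->
  (AH (@ced R S) (kstar [:: a]) (kstar (block j))
     <= ((2 * j + 1)%:R / (2 * j * j.+1)%:R)%:E)%E.
Proof.
move=> j_pos; apply: (AH_block_le (M := 2 * j * j.+1)) => [m m_pos | m r Mm rj].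
- rewrite -[wpow _ _]cats0; apply: le_trans (ced_le_hamming _ _ _ _) _.
  + by rewrite size_nseq size_block_pow.
  + by rewrite size_nseq muln_gt0 m_pos.
  rewrite -size_block_pow hamming_nseqr count_block_pow !size_nseq size_block_pow addn0.
  apply: ler_natr_div; nia.
- apply: le_trans (ced_le_hamming _ _ _ _) _.
  + by rewrite size_nseq size_block_pow.
  + by rewrite size_block_pow; nia.
  rewrite -size_block_pow hamming_nseql count_block_pow !size_nseq size_block_pow.
  apply: ler_natr_div; nia.
Qed.

End Blocks.

Local Open Scope ereal_scope.

Theorem mainTheorem9 (R : realType) (S : finType) (a b : S) :
  a != b ->
  forall i j : nat, (i < j)%N ->
    [/\ AH (@ned R S) (kstar [:: a]) (kstar (rcons (nseq j a) b))
          < AH (@ned R S) (kstar [:: a]) (kstar (rcons (nseq i a) b)),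
        AH (@ged R S) (kstar [:: a]) (kstar (rcons (nseq j a) b))
          < AH (@ged R S) (kstar [:: a]) (kstar (rcons (nseq i a) b))
      & AH (@ced R S) (kstar [:: a]) (kstar (rcons (nseq j a) b))
          < AH (@ced R S) (kstar [:: a]) (kstar (rcons (nseq i a) b))].
Proof.
move=> ab i j ij; have j_pos : (0 < j)%N by apply: leq_ltn_trans ij.
have ned_ced_gap : ((2 * j + 1)%:R / (2 * j * j.+1)%:R < 1 / (i.+1)%:R :> R)%R.
  by apply: (@ltr_natr_div _ _ _ 1); nia.
have ged_gap : (1 / (j.+1)%:R < 2%:R / (2 * i + 3)%:R :> R)%R.
  by apply: (@ltr_natr_div _ 1); lia.
split.
- apply: le_lt_trans (AH_ned_block_le R ab j_pos) _.
  by apply: lt_le_trans (AH_ned_block_ge R ab i); rewrite lte_fin.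
- apply: le_lt_trans (AH_ged_block_le R ab j_pos) _.
  by apply: lt_le_trans (AH_ged_block_ge R ab i); rewrite lte_fin.
- apply: le_lt_trans (AH_ced_block_le R ab j_pos) _.
  by apply: lt_le_trans (AH_ced_block_ge R ab i); rewrite lte_fin.
Qed.
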